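(* Let $T=(T,\eta,\mu)$ be a monad on a category $\mathcal{A}$ and $X$ an object of $\mathcal{A}$. (i) If $a\colon T(X)\to X$ is a $T$-algebra and $b\colon X\to T(X)$ is a $\overline{T}$-coalgebra (basis) on $a$, then $b$ is an equaliser in $\mathcal{A}$ of the pair $T(b),T(\eta_X)\colon T(X)\rightrightarrows T^2(X)$. (ii) Conversely, if $c\colon X\to T(X)$ is a map that is an equaliser of $T(c),T(\eta_X)\colon T(X)\rightrightarrows T^2(X)$, then there is a unique map $a\colon T(X)\to X$ with $c\circ a=\mu_X\circ T(c)$, this $a$ is a $T$-algebra, and $c$ is a $\overline{T}$-coalgebra on $a$. Thus pairs (algebra $a$, basis $b$ on $a$) on $X$ correspond bijectively to maps $c\colon X\to T(X)$ that equalise $T(c)$ and $T(\eta_X)$ universally, via $(a,b)\mapsto b$.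
   Context: For a monad $T=(T,\eta,\mu)$ on $\mathcal{A}$, an Eilenberg–Moore algebra is $a\colon T(X)\to X$ with $a\circ\eta_X=\mathrm{id}$ and $a\circ\mu_X=a\circ T(a)$. The induced comonad $\overline{T}$ on the category of algebras sends $a$ to the free algebra $\mu_X\colon T^2X\to TX$, with counit $a$ and comultiplication $T(\eta_X)$. A $\overline{T}$-coalgebra (basis) on the algebra $a\colon TX\to X$ is a map $b\colon X\to TX$ in $\mathcal{A}$ satisfying $b\circ a=\mu_X\circ T(b)$, $a\circ b=\mathrm{id}_X$ and $T(\eta_X)\circ b=T(b)\circ b$. *)

Set Implicit Arguments.
Unset Strict Implicit.

Record Category := {
  Ob :> Type;
  Hom : Ob -> Ob -> Type;
  idm : forall A : Ob, Hom A A;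
  comp : forall {A B C : Ob}, Hom B C -> Hom A B -> Hom A C;
  comp_assoc : forall A B C D (f : Hom C D) (g : Hom B C) (h : Hom A B),
      comp f (comp g h) = comp (comp f g) h;
  comp_id_l : forall A B (f : Hom A B), comp (idm B) f = f;
  comp_id_r : forall A B (f : Hom A B), comp f (idm A) = f
}.

Arguments Hom {c} _ _.
Arguments idm {c} _.
Arguments comp {c A B C} _ _.

Notation "g ∘ f" := (comp g f) (at level 40, left associativity).

Record EndoFunctor (C : Category) := {
  fobj :> Ob C -> Ob C;
  fmap : forall {A B : Ob C}, Hom A B -> Hom (fobj A) (fobj B);
  fmap_id : forall A : Ob C, fmap (idm A) = idm (fobj A);
  fmap_comp : forall A B D (g : Hom B D) (f : Hom A B),
      fmap (g ∘ f) = fmap g ∘ fmap f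
}.

Arguments fmap {C} e {A B} _.

Record Monad (C : Category) := {
  mT :> EndoFunctor C;
  eta : forall X : Ob C, Hom X (mT X);
  mu : forall X : Ob C, Hom (mT (mT X)) (mT X);
  eta_nat : forall A B (f : Hom A B), fmap mT f ∘ eta A = eta B ∘ f;
  mu_nat : forall A B (f : Hom A B),
      fmap mT f ∘ mu A = mu B ∘ fmap mT (fmap mT f);
  mu_assoc : forall X, mu X ∘ fmap mT (mu X) = mu X ∘ mu (mT X);
  mu_eta_l : forall X, mu X ∘ eta (mT X) = idm (mT X);
  mu_eta_r : forall X, mu X ∘ fmap mT (eta X) = idm (mT X)
}.

Arguments eta {C} m X.
Arguments mu {C} m X.

Definition is_algebra {C : Category} (T : Monad C) (X : Ob C) (a : Hom (T X) X) : Prop :=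
  a ∘ eta T X = idm X /\ a ∘ mu T X = a ∘ fmap T a.

Definition is_basis {C : Category} (T : Monad C) (X : Ob C)
    (a : Hom (T X) X) (b : Hom X (T X)) : Prop :=
  b ∘ a = mu T X ∘ fmap T b /\
  a ∘ b = idm X /\
  fmap T (eta T X) ∘ b = fmap T b ∘ b.

Definition is_equaliser {C : Category} {E Y Z : Ob C}
    (f g : Hom Y Z) (e : Hom E Y) : Prop :=
  f ∘ e = g ∘ e /\
  forall (W : Ob C) (h : Hom W Y), f ∘ h = g ∘ h ->
    exists u : Hom W E, e ∘ u = h /\ forall u' : Hom W E, e ∘ u' = h -> u' = u.

Arguments is_algebra {C} T X a.
Arguments is_basis {C} T X a b.
Arguments is_equaliser {C E Y Z} f g e.


Set Implicit Arguments.

(* Part (i) is an instance of the classical fact that a *split* fork is an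
   equaliser: if f e = g e and there are r, s with r e = 1, e r = s f and
   s g = 1, then e equalises f and g.  For a basis b on a, the splitting is
   r := a and s := mu_X (using b a = mu T(b) and the monad law mu T(eta) = 1).
   The last part (the algebra is determined by the basis) holds because a
   split monomorphism b is left-cancellable and b a = mu T(b) = b a'.
   For part (ii), mu_X T(c) also equalises T(c) and T(eta_X) (naturality of mu),
   so it factors uniquely as c a through the equaliser c; since c is monic,
   each algebra law for a, and the identity a c = 1, is obtained by
   post-composing with c and computing with the monad laws.
   Parts (i) and (iii) use only the basis axioms, not the algebra laws of a. *)

Section Equalisers.
Context {C : Category}.

Lemma section_mono {A B : Ob C} {s : Hom A B} {r : Hom B A} :
  r ∘ s = idm A ->
  forall (W : Ob C) (u v : Hom W A), s ∘ u = s ∘ v -> u = v.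
Proof.
  intros Hrs W u v Huv.
  rewrite <- (comp_id_l u), <- (comp_id_l v), <- Hrs, <- !comp_assoc, Huv.
  reflexivity.
Qed.

(* Every equaliser is a monomorphism: both maps are factorisations of e u. *)
Lemma equaliser_mono {E Y Z : Ob C} {f g : Hom Y Z} {e : Hom E Y} :
  is_equaliser f g e ->
  forall (W : Ob C) (u v : Hom W E), e ∘ u = e ∘ v -> u = v.
Proof.
  intros [Hfork Huniv] W u v Huv.
  assert (Hfork_u : f ∘ (e ∘ u) = g ∘ (e ∘ u))
    by (rewrite !comp_assoc, Hfork; reflexivity).
  destruct (Huniv W (e ∘ u) Hfork_u) as [w [_ Hw]].
  rewrite (Hw u eq_refl), (Hw v (eq_sym Huv)).
  reflexivity.
Qed.

(* A split fork is an equaliser: the factorisation of h is r h. *)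
Lemma split_fork_equaliser {E Y Z : Ob C}
    (f g : Hom Y Z) (e : Hom E Y) (r : Hom Y E) (s : Hom Z Y) :
  f ∘ e = g ∘ e -> r ∘ e = idm E -> e ∘ r = s ∘ f -> s ∘ g = idm Y ->
  is_equaliser f g e.
Proof.
  intros Hfork Hre Her Hsg. split; [exact Hfork|].
  intros W h Hh. exists (r ∘ h). split.
  - rewrite comp_assoc, Her, <- comp_assoc, Hh, comp_assoc, Hsg, comp_id_l.
    reflexivity.
  - intros u' Hu'.
    rewrite <- Hu', comp_assoc, Hre, comp_id_l.
    reflexivity.
Qed.

End Equalisers.

Section Bases.
Context {C : Category} {T : Monad C} {X : Ob C}.

Lemma basis_is_equaliser (a : Hom (T X) X) (b : Hom X (T X)) :
  is_basis T X a b -> is_equaliser (fmap T b) (fmap T (eta T X)) b.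
Proof.
  intros [Hmor [Hret Hcoass]].
  apply (split_fork_equaliser _ _ _ a (mu T X)).
  - symmetry; exact Hcoass.
  - exact Hret.
  - exact Hmor.
  - apply mu_eta_r.
Qed.

Lemma basis_determines_algebra (a a' : Hom (T X) X) (b : Hom X (T X)) :
  is_basis T X a b -> is_basis T X a' b -> a = a'.
Proof.
  intros [Hmor [_ _]] [Hmor' [Hret' _]].
  apply (section_mono Hret').
  rewrite Hmor, Hmor'.
  reflexivity.
Qed.

Section Equalising.
Context {c : Hom X (T X)}.
Hypothesis c_equaliser : is_equaliser (fmap T c) (fmap T (eta T X)) c.

Let c_mono : forall (W : Ob C) (u v : Hom W X), c ∘ u = c ∘ v -> u = v :=
  equaliser_mono c_equaliser.

Let c_fork : fmap T c ∘ c = fmap T (eta T X) ∘ c := proj1 c_equaliser.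

Lemma kleisli_extension_fork :
  fmap T c ∘ (mu T X ∘ fmap T c) = fmap T (eta T X) ∘ (mu T X ∘ fmap T c).
Proof.
  rewrite !comp_assoc, !mu_nat, <- !comp_assoc, <- !fmap_comp, c_fork.
  reflexivity.
Qed.

Lemma structure_map_exists : exists a : Hom (T X) X, c ∘ a = mu T X ∘ fmap T c.
Proof.
  destruct (proj2 c_equaliser _ _ kleisli_extension_fork) as [a [Ha _]].
  exists a; exact Ha.
Qed.

Context {a : Hom (T X) X}.
Hypothesis c_a : c ∘ a = mu T X ∘ fmap T c.

Lemma structure_map_retraction : a ∘ c = idm X.
Proof.
  apply c_mono.
  rewrite comp_assoc, c_a, comp_id_r, <- comp_assoc, c_fork,
    comp_assoc, mu_eta_r, comp_id_l.
  reflexivity.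
Qed.

Lemma structure_map_unit : a ∘ eta T X = idm X.
Proof.
  apply c_mono.
  rewrite comp_assoc, c_a, comp_id_r, <- comp_assoc, eta_nat,
    comp_assoc, mu_eta_l, comp_id_l.
  reflexivity.
Qed.

Lemma structure_map_assoc : a ∘ mu T X = a ∘ fmap T a.
Proof.
  apply c_mono.
  rewrite !comp_assoc, c_a.
  rewrite <- (comp_assoc (mu T X) (fmap T c) (mu T X)), mu_nat, comp_assoc,
    <- mu_assoc, <- !comp_assoc, <- !fmap_comp, c_a.
  reflexivity.
Qed.

Lemma structure_map_unique (a' : Hom (T X) X) :
  c ∘ a' = mu T X ∘ fmap T c -> a' = a.
Proof.
  intros c_a'. apply c_mono. rewrite c_a, c_a'. reflexivity.
Qed.

End Equalising.
End Bases.

Theorem lemma2p3 (C : Category) (T : Monad C) (X : Ob C) :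
  (forall (a : Hom (T X) X) (b : Hom X (T X)),
      is_algebra T X a -> is_basis T X a b ->
      is_equaliser (fmap T b) (fmap T (eta T X)) b)
  /\
  (forall c : Hom X (T X),
      is_equaliser (fmap T c) (fmap T (eta T X)) c ->
      exists a : Hom (T X) X,
        c ∘ a = mu T X ∘ fmap T c /\
        (forall a' : Hom (T X) X, c ∘ a' = mu T X ∘ fmap T c -> a' = a) /\
        is_algebra T X a /\ is_basis T X a c)
  /\
  (forall (a a' : Hom (T X) X) (b : Hom X (T X)),
      is_algebra T X a -> is_basis T X a b ->
      is_algebra T X a' -> is_basis T X a' b -> a = a').
Proof.
  split; [|split].
  - intros a b _ Hbasis. exact (basis_is_equaliser Hbasis).
  - intros c Hc.
    destruct (structure_map_exists Hc) as [a Ha].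
    exists a. repeat split.
    + exact Ha.
    + exact (structure_map_unique Hc Ha).
    + exact (structure_map_unit Hc Ha).
    + exact (structure_map_assoc Hc Ha).
    + exact Ha.
    + exact (structure_map_retraction Hc Ha).
    + symmetry; exact (proj1 Hc).
  - intros a a' b _ Hb _ Hb'. exact (basis_determines_algebra Hb Hb').
Qed.
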